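(* Let $n\ge 4$. Each of the following representations $\varepsilon_j:UV_n(2)\to\mathrm{GL}_{n+1}(\mathbb{C})$, $1\le j\le 4$, is reducible: $\varepsilon_j(\rho_i)=\mathrm{diag}(I_{i-1},R^{(j)},I_{n-i-1})$, $\varepsilon_j(\sigma_{i,t})=\mathrm{diag}(I_{i-1},S_t^{(j)},I_{n-i-1})$ for $1\le i\le n-1$, $t\in\{1,2\}$, where (1) $R^{(1)}=\begin{pmatrix}1&0&0\\0&0&r_6\\0&\frac1{r_6}&0\end{pmatrix}$, $S_t^{(1)}=\begin{pmatrix}1&0&0\\0&s_{5,t}&s_{6,t}\\0&s_{8,t}&s_{9,t}\end{pmatrix}$, with $r_6\ne0$, $s_{5,t}s_{9,t}-s_{6,t}s_{8,t}\ne0$; (2) $R^{(2)}=\begin{pmatrix}0&r_2&0\\ \frac1{r_2}&0&0\\0&0&1\end{pmatrix}$, $S_t^{(2)}=\begin{pmatrix}s_{1,t}&s_{2,t}&0\\ s_{4,t}&s_{5,t}&0\\0&0&1\end{pmatrix}$, with $r_2\ne0$, $s_{1,t}s_{5,t}-s_{2,t}s_{4,t}\ne0$; (3) $R^{(3)}=\begin{pmatrix}1&0&0\\ \frac1{r_6}&-1&r_6\\0&0&1\end{pmatrix}$, $S_t^{(3)}=\begin{pmatrix}1&0&0\\ s_{4,t}&s_{5,t}&r_6(1-r_6s_{4,t}-s_{5,t})\\0&0&1\end{pmatrix}$, with $r_6\ne0$, $s_{5,t}\ne0$; (4) $R^{(4)}=\begin{pmatrix}1&r_2&0\\0&-1&0\\0&\frac1{r_2}&1\end{pmatrix}$,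 $S_t^{(4)}=\begin{pmatrix}1&r_2(1-s_{5,t}-r_2s_{8,t})&0\\0&s_{5,t}&0\\0&s_{8,t}&1\end{pmatrix}$, with $r_2\ne0$, $s_{5,t}\ne0$. All parameters are complex numbers.
   Context: $UV_n(c)$ is the group with generators $\rho_i$ ($1\le i\le n-1$), $\sigma_{i,t}$ ($1\le i\le n-1$, $1\le t\le c$) and relations $\rho_i\rho_{i+1}\rho_i=\rho_{i+1}\rho_i\rho_{i+1}$, $\rho_i\rho_j=\rho_j\rho_i$ ($|i-j|\ge2$), $\rho_i^2=1$, $\sigma_{i,t}\sigma_{j,\ell}=\sigma_{j,\ell}\sigma_{i,t}$ ($|i-j|\ge2$), $\sigma_{i,t}\rho_j=\rho_j\sigma_{i,t}$ ($|i-j|\ge2$), $\rho_i\rho_{i+1}\sigma_{i,t}=\sigma_{i+1,t}\rho_i\rho_{i+1}$ ($1\le i\le n-2$). The displayed assignments define representations of $UV_n(2)$. $\mathrm{diag}$ denotes a block diagonal matrix, $I_r$ the $r\times r$ identity. Reducible means there is a nonzero proper subspace of $\mathbb{C}^{n+1}$ invariant under all image matrices. *)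

From HB Require Import structures.
From mathcomp Require Import all_boot all_order all_algebra.
From mathcomp Require Import complex.
From mathcomp Require Import reals.
Set Implicit Arguments. Unset Strict Implicit. Unset Printing Implicit Defensive.
Import Order.TTheory GRing.Theory Num.Theory.
Local Open Scope ring_scope.

Definition mx3 {F : fieldType} (a b c d e f g h k : F) : 'M[F]_3 :=
  \matrix_(x < 3, y < 3)
    nth 0 (nth [::] [:: [:: a; b; c]; [:: d; e; f]; [:: g; h; k]] x) y.

(* diag(I_{i-1}, B, I_{n-i-1}) : an (n+1)x(n+1) matrix, 1 <= i <= n-1;
   block B occupies rows/cols i-1, i, i+1 (0-based). *)
Definition blk {F : fieldType} (n i : nat) (B : 'M[F]_3) : 'M[F]_n.+1 :=
  \matrix_(a, b)
    if ((i.-1 <= a < i + 2) && (i.-1 <= b < i + 2))%N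
    then B (inord (a - i.-1)) (inord (b - i.-1))
    else (a == b)%:R.

(* Images of the generators rho_i, sigma_{i,t} (t in {1,2}, encoded 'I_2). *)
Definition gen_img {F : fieldType} (n : nat) (Rm : 'M[F]_3) (Sm : 'I_2 -> 'M[F]_3)
  (M : 'M[F]_n.+1) : Prop :=
  exists i : nat, (1 <= i <= n - 1)%N /\
    (M = blk n i Rm \/ exists t : 'I_2, M = blk n i (Sm t)).

(* The subgroup of GL generated by a set of (invertible) matrices:
   this is the image of the representation. *)
Inductive gen_group {F : fieldType} (m : nat) (S : 'M[F]_m.+1 -> Prop)
  : 'M[F]_m.+1 -> Prop :=
| gg1 : gen_group S 1%:M
| ggS M : S M -> gen_group S M
| ggV M : gen_group S M -> gen_group S (invmx M)
| ggM M N : gen_group S M -> gen_group S N -> gen_group S (M *m N).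

(* A set G of matrices acting on column vectors F^(m+1) is reducible if there
   is a nonzero proper subspace W invariant under all of them. W is encoded as
   the row space of V (rows = vectors of W, transposed); invariance
   M w \in W for w \in W reads (V *m M^T <= V)%MS. *)
Definition reducible_set {F : fieldType} (m : nat) (G : 'M[F]_m.+1 -> Prop) : Prop :=
  exists V : 'M[F]_m.+1,
    [/\ V != 0, (\rank V < m.+1)%N & forall M, G M -> (V *m M^T <= V)%MS].

Definition reducible_rep {F : fieldType} (n : nat) (Rm : 'M[F]_3)
  (Sm : 'I_2 -> 'M[F]_3) : Prop :=
  reducible_set (gen_group (@gen_img F n Rm Sm)).

Section Mats.
Variable F : fieldType.
Definition R1 (r6 : F) := mx3 1 0 0  0 0 r6  0 r6^-1 0.
Definition S1 (s5 s6 s8 s9 : F) := mx3 1 0 0  0 s5 s6  0 s8 s9.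
Definition R2 (r2 : F) := mx3 0 r2 0  r2^-1 0 0  0 0 1.
Definition S2 (s1 s2 s4 s5 : F) := mx3 s1 s2 0  s4 s5 0  0 0 1.
Definition R3 (r6 : F) := mx3 1 0 0  r6^-1 (-1) r6  0 0 1.
Definition S3 (r6 s4 s5 : F) := mx3 1 0 0  s4 s5 (r6 * (1 - r6 * s4 - s5))  0 0 1.
Definition R4 (r2 : F) := mx3 1 r2 0  0 (-1) 0  0 r2^-1 1.
Definition S4 (r2 s5 s8 : F) := mx3 1 (r2 * (1 - s5 - r2 * s8)) 0  0 s5 0  0 s8 1.
End Mats.

From HB Require Import structures.
From mathcomp Require Import all_boot all_order all_algebra.
From mathcomp Require Import complex.
From mathcomp Require Import reals.
From mathcomp Require Import zify.
Set Implicit Arguments.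
Unset Strict Implicit.
Unset Printing Implicit Defensive.
Import Order.TTheory GRing.Theory Num.Theory.
Local Open Scope ring_scope.

(* In cases (1) and (4) every block has first column e_1, and so has every
   generator image: the line through e_1 is invariant.  In case (2) the same
   holds for the last column and e_(n+1).  In case (3) every image has first
   row e_1^T, so the hyperplane x_1 = 0 is invariant.  A subspace stable under
   a matrix is stable under its inverse, by comparing dimensions, so stability
   under the generators propagates to the whole image of the representation. *)

Lemma stablemx_invmx (F : fieldType) (p m : nat) (V : 'M[F]_(p, m)) (f : 'M[F]_m) :
  stablemx V f -> stablemx V (invmx f).
Proof.
move=> sVfV; have [fU | /invmx_out -> //] := boolP (f \in unitmx).
have /andP[_ sVVf] : (V *m f == V)%MS.
  by rewrite -(mxrank_leqif_eq sVfV) mxrankMfree ?row_free_unit.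
by have := submxMr (invmx f) sVVf; rewrite mulmxK.
Qed.

Lemma stablemx_kermx_fixed (F : fieldType) (m : nat) (y : 'cV[F]_m) (f : 'M[F]_m) :
  f *m y = y -> stablemx (kermx y) f.
Proof. by move=> fy; rewrite sub_kermx -mulmxA fy mulmx_ker. Qed.

Lemma stablemx_delta_row (F : fieldType) (m : nat) (j : 'I_m) (M : 'M[F]_m) :
  col j M = delta_mx j 0 -> stablemx (delta_mx 0 j : 'rV_m) M^T.
Proof. by rewrite -rowE -tr_col => ->; rewrite trmx_delta. Qed.

Lemma stablemx_kermx_delta (F : fieldType) (m : nat) (j : 'I_m) (M : 'M[F]_m) :
  row j M = delta_mx 0 j -> stablemx (kermx (delta_mx j 0 : 'cV_m)) M^T.
Proof.
by move=> Mj; apply: stablemx_kermx_fixed; rewrite -colE -tr_row Mj trmx_delta.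
Qed.

Section GeneratedGroup.
Variables (F : fieldType) (m : nat) (S : 'M[F]_m.+1 -> Prop).

Lemma gen_group_stablemx p (V : 'M[F]_(p, m.+1)) :
  (forall M, S M -> stablemx V M^T) -> forall M, gen_group S M -> stablemx V M^T.
Proof.
move=> sVS M; elim=> {M} [|M /sVS //|M _|M N _ sVM _ sVN].
- by rewrite trmx1 mulmx1.
- by rewrite trmx_inv; apply: stablemx_invmx.
- by rewrite trmx_mul; apply: stablemxM.
Qed.

Lemma reducible_set_stablemx p (V : 'M[F]_(p, m.+1)) :
  (0 < \rank V < m.+1)%N -> (forall M, S M -> stablemx V M^T) ->
  reducible_set (gen_group S).
Proof.
move=> /andP[rV_gt0 rV_lt] sVS; exists <<V>>%MS.
rewrite -mxrank_eq0 !mxrank_gen -lt0n; split=> //.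
by move=> M /(gen_group_stablemx sVS); rewrite (eqmx_stable _ (genmxE V)).
Qed.

End GeneratedGroup.

Section Blocks.
Variables (F : fieldType) (n : nat).

Lemma tr_blk i (B : 'M[F]_3) : (blk n i B)^T = blk n i B^T.
Proof. by apply/matrixP=> a b; rewrite !mxE andbC eq_sym. Qed.

Lemma blk_col0 i (B : 'M[F]_3) :
  (0 < i)%N -> col 0 B = delta_mx 0 0 -> col 0 (blk n i B) = delta_mx 0 0.
Proof.
move=> i_gt0 /colP B0; apply/colP=> a; rewrite !mxE eqxx andbT.
case: i i_gt0 => [|[|i]] //= _; last by rewrite andbF.
case: ifP => [/andP[a_lt3 _] | _] //; rewrite !subn0.
have := B0 (inord a); rewrite !mxE andbT -val_eqE /= inordK //.
by move=> <-; congr (B _ _); apply/val_inj; rewrite /= inordK.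
Qed.

Lemma blk_row0 i (B : 'M[F]_3) :
  (0 < i)%N -> row 0 B = delta_mx 0 0 -> row 0 (blk n i B) = delta_mx 0 0.
Proof.
move=> i_gt0 B0; rewrite -[blk n i B]trmxK tr_blk -tr_col blk_col0 ?trmx_delta //.
by rewrite -tr_row B0 trmx_delta.
Qed.

Lemma blk_col_max i (B : 'M[F]_3) :
  (0 < i <= n - 1)%N -> col ord_max B = delta_mx ord_max 0 ->
  col ord_max (blk n i B) = delta_mx ord_max 0.
Proof.
move=> /andP[i_gt0 i_le] /colP B2; apply/colP=> a; rewrite !mxE eqxx andbT.
case: ifP => /= [/andP[/andP[a_ge a_lt] /andP[n_ge n_lt]] | _] //.
have -> : (n - i.-1 = 2)%N by lia.
have := B2 (inord (a - i.-1)); rewrite !mxE andbT -val_eqE /= inordK; last by lia.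
have -> : inord 2 = ord_max :> 'I_3 by exact/val_inj/inordK.
by move=> ->; rewrite -val_eqE /=; congr (_%:R); apply/eqP/eqP; lia.
Qed.

End Blocks.

Lemma mx3_col0 (F : fieldType) (b c e f h k : F) :
  col 0 (mx3 1 b c 0 e f 0 h k) = delta_mx 0 0.
Proof. by apply/colP=> -[[|[|[|//]]] ?]; rewrite !mxE. Qed.

Lemma mx3_row0 (F : fieldType) (d e f g h k : F) :
  row 0 (mx3 1 0 0 d e f g h k) = delta_mx 0 0.
Proof. by apply/rowP=> -[[|[|[|//]]] ?]; rewrite !mxE. Qed.

Lemma mx3_col_max (F : fieldType) (a b d e g h : F) :
  col ord_max (mx3 a b 0 d e 0 g h 1) = delta_mx ord_max 0.
Proof. by apply/colP=> -[[|[|[|//]]] ?]; rewrite !mxE. Qed.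

Section Representations.
Variables (F : fieldType) (n : nat) (Rm : 'M[F]_3) (Sm : 'I_2 -> 'M[F]_3).

Lemma gen_imgP (P : 'M[F]_n.+1 -> Prop) :
  (forall i, (1 <= i <= n - 1)%N -> P (blk n i Rm)) ->
  (forall i t, (1 <= i <= n - 1)%N -> P (blk n i (Sm t))) ->
  forall M, @gen_img F n Rm Sm M -> P M.
Proof. by move=> PR PS M [i [i_range [->|[t ->]]]]; [apply: PR | apply: PS]. Qed.

Hypothesis n_gt0 : (0 < n)%N.

Lemma reducible_rep_col0 :
  col 0 Rm = delta_mx 0 0 -> (forall t, col 0 (Sm t) = delta_mx 0 0) ->
  reducible_rep n Rm Sm.
Proof.
move=> R0 S0; apply: (reducible_set_stablemx (V := (delta_mx 0 0 : 'rV_n.+1))).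
  by rewrite mxrank_delta.
by apply: gen_imgP => [i | i t] /andP[i_gt0 _]; apply/stablemx_delta_row/blk_col0.
Qed.

Lemma reducible_rep_col_max :
  col ord_max Rm = delta_mx ord_max 0 ->
  (forall t, col ord_max (Sm t) = delta_mx ord_max 0) ->
  reducible_rep n Rm Sm.
Proof.
move=> R2 S2; apply: (reducible_set_stablemx (V := (delta_mx 0 ord_max : 'rV_n.+1))).
  by rewrite mxrank_delta.
by apply: gen_imgP => [i | i t] i_range; apply/stablemx_delta_row/blk_col_max.
Qed.

Lemma reducible_rep_row0 :
  row 0 Rm = delta_mx 0 0 -> (forall t, row 0 (Sm t) = delta_mx 0 0) ->
  reducible_rep n Rm Sm.
Proof.
move=> R0 S0.
apply: (reducible_set_stablemx (V := (kermx (delta_mx 0 0 : 'cV_n.+1)))).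
  by rewrite mxrank_ker mxrank_delta subn1 n_gt0 ltn_predL.
by apply: gen_imgP => [i | i t] /andP[i_gt0 _]; apply/stablemx_kermx_delta/blk_row0.
Qed.

End Representations.

Theorem theorem4p2 (R : realType) (n : nat) : (4 <= n)%N ->
  (forall (r6 : R[i]) (s5 s6 s8 s9 : 'I_2 -> R[i]),
     r6 != 0 -> (forall t, s5 t * s9 t - s6 t * s8 t != 0) ->
     reducible_rep n (R1 r6) (fun t => S1 (s5 t) (s6 t) (s8 t) (s9 t))) /\
  (forall (r2 : R[i]) (s1 s2 s4 s5 : 'I_2 -> R[i]),
     r2 != 0 -> (forall t, s1 t * s5 t - s2 t * s4 t != 0) ->
     reducible_rep n (R2 r2) (fun t => S2 (s1 t) (s2 t) (s4 t) (s5 t))) /\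
  (forall (r6 : R[i]) (s4 s5 : 'I_2 -> R[i]),
     r6 != 0 -> (forall t, s5 t != 0) ->
     reducible_rep n (R3 r6) (fun t => S3 r6 (s4 t) (s5 t))) /\
  (forall (r2 : R[i]) (s5 s8 : 'I_2 -> R[i]),
     r2 != 0 -> (forall t, s5 t != 0) ->
     reducible_rep n (R4 r2) (fun t => S4 r2 (s5 t) (s8 t))).
Proof.
move=> n_ge4; have n_gt0 : (0 < n)%N by apply: leq_trans n_ge4.
split; [|split; [|split]] => *.
- by apply: reducible_rep_col0 => // [|t]; apply: mx3_col0.
- by apply: reducible_rep_col_max => // [|t]; apply: mx3_col_max.
- by apply: reducible_rep_row0 => // [|t]; apply: mx3_row0.
- by apply: reducible_rep_col0 => // [|t]; apply: mx3_col0.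
Qed.
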